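(* Let $\bm\mu=(\mu_1,\dots,\mu_r)$ be finite positive Borel measures on the unit circle with infinite supports, fix the square-root branch as in the context, let $\bm n\in\mathbb N^r$ and $\tau\in\partial\mathbb D$. Then $\bm n$ is $\phi$-normal if and only if there is no nonzero $X\in\operatorname{span}\{z^p\}_{p=-(|\bm n|-1)/2}^{(|\bm n|-1)/2}$ such that $X(z)=\tau\overline{X(1/\bar z)}$ and $\int X(z)z^{-p}\,d\mu_j(z)=0$ for $p=-(n_j-1)/2,\dots,(n_j-1)/2$, $j=1,\dots,r$.
   Context: $\partial\mathbb D=\{|z|=1\}$. Fix $t_0\in\mathbb R$ and let $z^{k/2}=|z|^{k/2}\exp(ik\arg_{[t_0,t_0+2\pi)}(z)/2)$ for $k\in\mathbb Z$. $|\bm n|=\sum_j n_j$; $\operatorname{span}\{z^p\}_{p=a}^b$ ($b-a\in\mathbb Z$) is the span of $z^a,z^{a+1},\dots,z^b$ (zero space if $a>b$; the range of $p$ in an orthogonality condition is empty when $n_j=0$). $\bm n$ is $\phi$-normal if there is a unique $\phi\in\operatorname{span}\{z^p\}_{p=-|\bm n|/2}^{|\bm n|/2}$ with coefficient of $z^{|\bm n|/2}$ equal to $1$ and $\int\phi(z)z^{-p}\,d\mu_j(z)=0$ for $p=-n_j/2,\dots,n_j/2-1$, $j=1,\dots,r$ (by convention $\bm 0$ is $\phi$-normal). *)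

From HB Require Import structures.
From mathcomp Require Import all_boot all_order all_algebra.
From mathcomp Require Import all_classical all_reals all_analysis.
From mathcomp Require Import complex.
Set Implicit Arguments. Unset Strict Implicit. Unset Printing Implicit Defensive.
Import Order.TTheory GRing.Theory Num.Theory.
Local Open Scope ring_scope.
Local Open Scope complex_scope.
Local Open Scope classical_set_scope.

Section Defs.
Variable R : realType.

(* The complex plane C = R[i]; points of R * R (the measurable space carrying
   the measures, with its product = Borel sigma-algebra) are identified with
   complex numbers via toC. *)
Definition toC (q : (R * R)%type) : R[i] := q.1 +i* q.2.

Definition unit_circle : set (R * R)%type :=
  [set q | q.1 ^+ 2 + q.2 ^+ 2 = 1].

Definition disc (x : (R * R)%type) (e : R) : set (R * R)%type :=
  [set q | (q.1 - x.1) ^+ 2 + (q.2 - x.2) ^+ 2 < e ^+ 2].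

Definition msupport (mu : set (R * R)%type -> \bar R) : set (R * R)%type :=
  [set x | forall e : R, 0 < e -> (0 < mu (disc x e))%E].

Definition expi (t : R) : R[i] := cos t +i* sin t.

Definition polar (t0 : R) (z : R[i]) : (R * R)%type :=
  xget (1, t0) [set rt : (R * R)%type | 0 < rt.1 /\
     t0 <= rt.2 < t0 + 2 * pi /\ z = (rt.1)%:C * expi rt.2].

Definition zhalf (t0 : R) (k : int) (z : R[i]) : R[i] :=
  ((polar t0 z).1 `^ (k%:~R / 2))%:C * expi (k%:~R * (polar t0 z).2 / 2).

Definition cint (mu : {measure set (R * R)%type -> \bar R}) (f : (R * R)%type -> R[i])
  : R[i] :=
  (Rintegral mu setT (fun q => complex.Re (f q))) +i* (Rintegral mu setT (fun q => complex.Im (f q))).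

(* Element of span{z^p}_{p=a}^{a+m-1} given by its coefficient vector
   c : 'I_m -> C; here a2 = 2a is an integer and the i-th basis function
   is z^{(a2 + 2 i)/2}. *)
Definition spanfun (t0 : R) (a2 : int) (m : nat) (c : 'I_m -> R[i]) (z : R[i])
  : R[i] :=
  \sum_(i < m) c i * zhalf t0 (a2 + 2 * (i : nat)%:Z) z.

Definition nabs (r : nat) (n : 'I_r -> nat) : nat := \sum_(j < r) n j.

(* phi-normality of n.  phi ranges over span{z^p}_{p=-|n|/2}^{|n|/2}, i.e. the
   coefficient vectors c : 'I_(|n|+1) -> C with basis z^{(-|n| + 2i)/2};
   the coefficient of z^{|n|/2} is c ord_max.  Orthogonality:
   int phi(z) z^{-p} dmu_j = 0 for p = -n_j/2, ..., n_j/2 - 1, i.e.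
   2p = -n_j + 2l, l < n_j. *)
Definition phi_normal (t0 : R) (r : nat) (mu : 'I_r -> {measure set (R * R)%type -> \bar R})
  (n : 'I_r -> nat) : Prop :=
  n = (fun _ => 0%N) \/
  exists! c : 'I_(nabs n).+1 -> R[i],
    c ord_max = 1 /\
    forall (j : 'I_r) (l : 'I_(n j)),
      cint (mu j) (fun q =>
        spanfun t0 (- (nabs n)%:Z) c (toC q) *
        zhalf t0 (- (- (n j)%:Z + 2 * (l : nat)%:Z)) (toC q)) = 0.

End Defs.

(* Pairing the basis z^{(-|n| + 2i)/2}, i <= |n|, of the space of phi with the
   |n| orthogonality conditions gives an (|n|+1) x |n| matrix of moments
   int z^{k/2} dmu_j, and the conditions on X use the same matrix without its
   last row.  Hence n is phi-normal iff that square block has a trivial left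
   kernel.  As the mu_j live on the circle, the conjugate of int z^{k/2} is
   int z^{-k/2}, so the kernel is stable under the antilinear involution
   c |-> tau * conj (c reversed), which on functions is X |-> tau * conj X(1/conj z).
   A nonzero subspace stable under an antilinear involution contains a nonzero
   fixed vector, c + sigma c or i c + sigma (i c): a nonzero symmetric X. *)

From HB Require Import structures.
From mathcomp Require Import all_boot all_order all_algebra.
From mathcomp Require Import all_classical all_reals all_analysis.
From mathcomp Require Import complex.
From mathcomp Require Import measurable_realfun ring lra zify.
Import Order.TTheory GRing.Theory Num.Theory.
Import numFieldNormedType.Exports.
Local Open Scope ring_scope.
Local Open Scope complex_scope.
Local Open Scope classical_set_scope.
Set Implicit Arguments. Unset Strict Implicit. Unset Printing Implicit Defensive.

Section MonicAnnihilator.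
Variables (F : fieldType) (S : finType).

Definition annihilates (m : nat) (B : 'I_m -> S -> F) (c : 'I_m -> F) :=
  forall s, \sum_(i < m) c i * B i s = 0.

Lemma annihilates_lin m (B : 'I_m -> S -> F) a u v :
  annihilates B u -> annihilates B v -> annihilates B (fun i => a * u i + v i).
Proof.
move=> u_ann v_ann s; under eq_bigr do rewrite mulrDl -mulrA.
by rewrite big_split /= -mulr_sumr u_ann v_ann mulr0 addr0.
Qed.

Variables (N : nat) (A : 'I_N.+1 -> S -> F).
Hypothesis card_S : #|S| = N.

Local Notation widen := (widen_ord (leqnSn N)).
Local Notation A' := (fun i => A (widen i)).

Let extend (c : 'I_N -> F) (x : F) (i : 'I_N.+1) : F :=
  if unlift ord_max i is Some k then c k else x.

Let widen_lift (i : 'I_N) : widen i = lift ord_max i.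
Proof. by apply/val_inj; rewrite /= /bump leqNgt ltn_ord. Qed.

Let extend_widen c x i : extend c x (widen i) = c i.
Proof. by rewrite /extend widen_lift liftK. Qed.

Let sum_extend c x s :
  \sum_(i < N.+1) extend c x i * A i s = \sum_(i < N) c i * A' i s + x * A ord_max s.
Proof.
rewrite big_ord_recr /=; congr (_ + _); last by rewrite /extend unlift_none.
by apply: eq_bigr => i _; rewrite extend_widen.
Qed.

Let extendE (c : 'I_N.+1 -> F) : c = extend (fun i => c (widen i)) (c ord_max).
Proof.
by apply/funext => i; rewrite /extend; case: unliftP => [k ->|->]; rewrite ?widen_lift.
Qed.

Lemma unique_monic_annihilator :
  (exists! c : 'I_N.+1 -> F, c ord_max = 1 /\ annihilates A c) <->
  (forall c : 'I_N -> F, annihilates A' c -> c = (fun _ => 0)).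
Proof.
split=> [[c1 [[c1_max c1_ann] c1_uniq]] c c_ann|ker0].
  pose c2 := extend (fun i => c1 (widen i) + c i) 1.
  have c2_ann : annihilates A c2.
    move=> s; rewrite sum_extend -c1_max.
    under eq_bigr do rewrite mulrDl; rewrite big_split /= c_ann addr0.
    by rewrite -sum_extend -extendE c1_ann.
  have /c1_uniq c2_c1 : c2 ord_max = 1 /\ annihilates A c2.
    by split; rewrite // /c2 /extend unlift_none.
  apply/funext => i; have := congr1 (fun f => f (widen i)) c2_c1.
  by rewrite /c2 /= extend_widen => /esym/eqP; rewrite -subr_eq0 addrC addKr => /eqP.
pose M : 'M[F]_(N, #|S|) := \matrix_(i, k) A' i (enum_val k).
have mulM (v : 'rV_N) s : (v *m M) 0 (enum_rank s) = \sum_i v 0 i * A' i s.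
  by rewrite mxE; apply: eq_bigr => i _; rewrite mxE enum_rankK.
have M_full : row_full M.
  have M_free : row_free M.
    apply: inj_row_free => v vM0; apply/rowP => i; rewrite mxE.
    have /ker0/(congr1 (fun f => f i)) // : annihilates A' (fun i => v 0 i).
    by move=> s; rewrite -mulM vM0 mxE.
  by rewrite /row_full (eqP M_free) card_S.
pose w := \row_k (- A ord_max (enum_val k)) *m pinvmx M.
have w_sum s : \sum_i w 0 i * A' i s = - A ord_max s.
  by rewrite -mulM mulmxKpV ?submx_full // mxE enum_rankK.
exists (extend (fun i => w 0 i) 1); split.
  split; first by rewrite /extend unlift_none.
  by move=> s; rewrite sum_extend w_sum mul1r addNr.
move=> y [y_max y_ann]; rewrite [y]extendE y_max; congr extend; apply/funext => i.
apply/eqP; rewrite eq_sym -subr_eq0; apply/eqP.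
have /ker0/(congr1 (fun f => f i)) // : annihilates A' (fun i => y (widen i) - w 0 i).
move=> s; under eq_bigr do rewrite mulrBl; rewrite sumrB w_sum opprK.
by have := y_ann s; rewrite {1}[y]extendE sum_extend y_max mul1r.
Qed.

End MonicAnnihilator.

Section AntilinearInvolution.
Variables (R : rcfType) (V : lmodType R[i]) (sigma : V -> V).
Hypothesis sigmaD : {morph sigma : u v / u + v}.
Hypothesis sigmaZ : forall a v, sigma (a *: v) = a^* *: sigma v.
Hypothesis sigmaK : involutive sigma.

Lemma antilinear_fixed_point (P : V -> Prop) :
  (forall a u v, P u -> P v -> P (a *: u + v)) -> (forall v, P v -> P (sigma v)) ->
  forall u, P u -> u != 0 -> exists v, [/\ P v, v != 0 & sigma v = v].
Proof.
move=> P_lin P_sigma u Pu u_neq0.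
have P0 : P 0 by have := P_lin (-1) u u Pu Pu; rewrite scaleN1r addNr.
pose fix_of a := a *: u + sigma (a *: u).
have fixedP a : sigma (fix_of a) = fix_of a by rewrite sigmaD sigmaK addrC.
have P_fix a : P (fix_of a).
  have Pau : P (a *: u) by have := P_lin a u 0 Pu P0; rewrite addr0.
  exact: P_lin a u _ Pu (P_sigma _ Pau).
have [fix1|] := eqVneq (fix_of 1) 0; last by exists (fix_of 1).
have [fixi|] := eqVneq (fix_of 'i%R) 0; last by exists (fix_of 'i%R).
move: fixi; rewrite /fix_of sigmaZ conjCi scaleNr -scalerBr => /eqP.
rewrite scaler_eq0 (negbTE (neq0Ci _)) /= subr_eq0 => /eqP sigma_u.
move: fix1; rewrite /fix_of !scale1r -sigma_u -mulr2n -scaler_nat => /eqP.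
by rewrite scaler_eq0 pnatr_eq0 (negbTE u_neq0).
Qed.

End AntilinearInvolution.

Section Expi.
Variable R : realType.
Implicit Types r t : R.

Lemma real_mul_expi r t : r%:C * expi t = (r * cos t) +i* (r * sin t).
Proof. by rewrite /expi; simpc. Qed.

Lemma expiD t t' : expi t * expi t' = expi (t + t').
Proof. by rewrite /expi; simpc; rewrite cosD sinD; congr (_ +i* _); ring. Qed.

Lemma expi0 : expi 0 = 1 :> R[i].
Proof. by rewrite /expi cos0 sin0. Qed.

Lemma conj_real_mul_expi r t : (r%:C * expi t)^* = r%:C * expi (- t).
Proof. by rewrite !real_mul_expi cosN sinN; simpc. Qed.

Lemma real_mul_expi_eq r r' t t' : 0 < r -> 0 < r' ->
  r%:C * expi t = r'%:C * expi t' -> r = r' /\ cos t = cos t' /\ sin t = sin t'.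
Proof.
move=> r0 r'0; rewrite !real_mul_expi => -[ec es].
have r2 : r ^+ 2 = r' ^+ 2.
  transitivity ((r * cos t) ^+ 2 + (r * sin t) ^+ 2).
    by rewrite -[LHS]mulr1 -(cos2Dsin2 t); ring.
  by rewrite ec es -[RHS]mulr1 -(cos2Dsin2 t'); ring.
have rr' : r = r' by nra.
by subst r'; split; [|split; apply: (mulfI (lt0r_neq0 r0))].
Qed.

Lemma eq_angle_cos_sin t0 t t' :
  t0 <= t < t0 + 2 * pi -> t0 <= t' < t0 + 2 * pi ->
  cos t = cos t' -> sin t = sin t' -> t = t'.
Proof.
wlog tt' : t t' / t <= t'.
  move=> wlog_le ht ht' ec es; have [le|/ltW lt] := lerP t t'; first exact: wlog_le.
  by apply/esym/wlog_le.
move=> /andP[ht0 ht1] /andP[ht'0 ht'1] ec es.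
pose h := (t' - t) / 2.
have h0 : 0 <= h by rewrite /h; lra.
have hpi : h < pi by rewrite /h; lra.
have cos2h : cos (h + h) = 1.
  have -> : h + h = t' + - t by rewrite /h; field.
  by rewrite cosD cosN sinN -ec -es; have := cos2Dsin2 t; rewrite !expr2 => ?; lra.
have sinh0 : sin h = 0.
  apply/eqP; rewrite -sqrf_eq0; apply/eqP.
  by move: cos2h; rewrite cosD; have := cos2Dsin2 h; rewrite !expr2 => ? ?; lra.
have [hpos|] := ltrP 0 h.
  by have := @sin_gt0_pi _ h; rewrite hpos hpi sinh0 ltxx => /(_ isT).
move=> hle; have : h = 0 by apply/eqP; rewrite eq_le hle h0.
by rewrite /h => ?; lra.
Qed.

End Expi.

Section CircleAngle.
Variable R : realType.

Definition circle_angle (c s : R) : R :=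
  if 0 <= s then acos c else 2 * pi - acos c.

Lemma circle_angleP c s : c ^+ 2 + s ^+ 2 = 1 ->
  [/\ cos (circle_angle c s) = c, sin (circle_angle c s) = s
    & 0 <= circle_angle c s < 2 * pi].
Proof.
move=> cs1; have c1 : -1 <= c <= 1 by apply/andP; split; nra.
have [/andP[acos_ge0 acos_lepi] cos_acos] := acos_def c1.
have pi0 := pi_gt0 R.
have sin_acos_c : sin (acos c) = `|s| by rewrite sin_acos // -cs1 addrC addKr sqrtr_sqr.
rewrite /circle_angle; case: ifPn => s0.
  by rewrite cos_acos sin_acos_c ger0_norm //; split => //; apply/andP; split; lra.
rewrite -ltNge in s0; have acos_gt0 : 0 < acos c.
  by apply: acos_gt0; apply/andP; split; [case/andP: c1|nra].
have -> : 2 * pi - acos c = - acos c + pi *+ 2 by rewrite addrC mulr_natl.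
rewrite cosD2pi sinD2pi cosN sinN cos_acos sin_acos_c ltr0_norm // opprK.
by split => //; rewrite -mulr_natl; apply/andP; split; lra.
Qed.

End CircleAngle.

Section Polar.
Variables (R : realType) (t0 : R).

Definition is_polar (z : R[i]) (rt : R * R) : Prop :=
  0 < rt.1 /\ t0 <= rt.2 < t0 + 2 * pi /\ z = rt.1%:C * expi rt.2.

Lemma is_polar_unique z p p' : is_polar z p -> is_polar z p' -> p = p'.
Proof.
case: p p' => [r t] [r' t'] [/= r0 [ht ->]] [/= r'0 [ht' /(real_mul_expi_eq r0 r'0)]].
by move=> [<- [ec es]]; rewrite (eq_angle_cos_sin ht ht' ec es).
Qed.

Definition clamp1 (x : R) : R := Num.max (-1) (Num.min 1 x).

(* The angle of [z e^{-i t0}] is read off the cosine and sine of its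
   direction; clamping the cosine keeps the formula meaningful, and monotone
   in the cosine, on all of [R * R], which is what makes it measurable. *)
Definition polar_angle (x y : R) : R :=
  let r := Num.sqrt (x ^+ 2 + y ^+ 2) in
  t0 + circle_angle (clamp1 ((x * cos t0 + y * sin t0) / r))
                    ((y * cos t0 - x * sin t0) / r).

Lemma is_polar_explicit x y : x +i* y != 0 ->
  is_polar (x +i* y) (Num.sqrt (x ^+ 2 + y ^+ 2), polar_angle x y).
Proof.
move=> xy_neq0; rewrite /polar_angle /=.
set r := Num.sqrt _; set c := (_ / r); set s := (_ / r).
have r2 : r ^+ 2 = x ^+ 2 + y ^+ 2 by rewrite sqr_sqrtr // addr_ge0 ?sqr_ge0.
have r0 : 0 < r.
  rewrite lt_neqAle sqrtr_ge0 andbT eq_sym; apply: contraNneq xy_neq0 => r_eq0.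
  have : x ^+ 2 + y ^+ 2 = 0 by rewrite -r2 r_eq0 expr0n.
  by move=> xy2; rewrite eq_complex /=; apply/andP; split; apply/eqP; nra.
have ct := cos2Dsin2 t0.
have rc : r * c = x * cos t0 + y * sin t0 by rewrite /c mulrC divfK ?gt_eqF.
have rs : r * s = y * cos t0 - x * sin t0 by rewrite /s mulrC divfK ?gt_eqF.
have cs1 : c ^+ 2 + s ^+ 2 = 1.
  apply: (mulfI (expf_neq0 2 (lt0r_neq0 r0))); rewrite mulr1.
  transitivity ((r * c) ^+ 2 + (r * s) ^+ 2); first by ring.
  by rewrite rc rs r2 -[RHS]mulr1 -ct; ring.
have clamp_c : clamp1 c = c.
  by rewrite /clamp1 min_r ?max_r //; nra.
have [ca sa /andP[a0 a2]] := circle_angleP cs1.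
rewrite clamp_c; split => //=; split; first by apply/andP; split; lra.
rewrite real_mul_expi cosD sinD ca sa; congr (_ +i* _).
  transitivity (cos t0 * (r * c) - sin t0 * (r * s)); last by ring.
  by rewrite rc rs -[LHS]mulr1 -ct; ring.
transitivity (sin t0 * (r * c) + cos t0 * (r * s)); last by ring.
by rewrite rc rs -[LHS]mulr1 -ct; ring.
Qed.

Lemma polarP z : z != 0 -> is_polar z (polar t0 z).
Proof.
case: z => x y xy_neq0; apply: (@xgetPex _ (1, t0) (is_polar (x +i* y))).
by exists (Num.sqrt (x ^+ 2 + y ^+ 2), polar_angle x y); apply: is_polar_explicit.
Qed.

Lemma polar_explicit x y : x +i* y != 0 ->
  polar t0 (x +i* y) = (Num.sqrt (x ^+ 2 + y ^+ 2), polar_angle x y).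
Proof.
by move=> xy_neq0; apply: (is_polar_unique (polarP xy_neq0)); exact: is_polar_explicit.
Qed.

Lemma polar0 : polar t0 0 = (1, t0).
Proof.
apply: (@xgetPN _ (1, t0) (is_polar 0)) => -[r t] [/= r0 [_]].
rewrite real_mul_expi => -[rc0 rs0]; have := cos2Dsin2 t; rewrite !expr2 => cs1.
have : r * r = 0 by rewrite -[LHS]mulr1 -cs1; nra.
by move/eqP; rewrite mulf_eq0 orbb gt_eqF.
Qed.

Lemma polar_radius_gt0 z : 0 < (polar t0 z).1.
Proof. by have [->|/polarP[]//] := eqVneq z 0; rewrite polar0. Qed.

End Polar.

Section HalfPowers.
Variables (R : realType) (t0 : R).

Lemma zhalfD (a b : int) (z : R[i]) :
  zhalf t0 a z * zhalf t0 b z = zhalf t0 (a + b) z.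
Proof.
rewrite /zhalf mulrACA -rmorphM expiD -powRD; last first.
  by apply/implyP => _; rewrite gt_eqF ?polar_radius_gt0.
by rewrite intrD !mulrDl.
Qed.

Lemma zhalfN_unit (a : int) (x y : R) : x ^+ 2 + y ^+ 2 = 1 ->
  zhalf t0 (- a) (x +i* y) = (zhalf t0 a (x +i* y))^*.
Proof.
move=> xy1; have xy_neq0 : x +i* y != 0.
  by apply: contra_eq_neq xy1 => -[-> ->]; rewrite expr0n addr0 eq_sym oner_neq0.
by rewrite /zhalf polar_explicit // xy1 sqrtr1 powR1 conj_real_mul_expi intrN !mulNr.
Qed.

(* Stated with [Num.conj], the form conjugation takes after [rmorphM]. *)
Lemma zhalf_reflect (a : int) (z : R[i]) : z != 0 ->
  Num.conj (zhalf t0 a ((z^*)^-1)) = zhalf t0 (- a) z.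
Proof.
move=> z_neq0; rewrite -[Num.conj z]/(conjc z) -[Num.conj _]/(conjc _).
have w_neq0 : (conjc z)^-1 != 0 by rewrite invr_eq0 conjc_eq0.
have := polarP t0 z_neq0; case E: (polar t0 z) => [r t] [r0 [ht ez]].
have inv_conj_z : (conjc z)^-1 = r^-1%:C * expi t.
  apply: mulr1_eq; rewrite ez conj_real_mul_expi mulrACA -rmorphM expiD.
  by rewrite addNr expi0 mulr1 divff ?gt_eqF.
have polar_w : polar t0 ((conjc z)^-1) = (r^-1, t).
  by apply: (is_polar_unique (polarP t0 w_neq0)); split => //=; rewrite invr_gt0.
rewrite /zhalf E polar_w conj_real_mul_expi intrN !mulNr powRN /=; congr (_%:C * _).
by apply/esym/mulr1_eq; rewrite -powRM ?invr_ge0 ?ltW // divff ?gt_eqF // powR1.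
Qed.

End HalfPowers.

Section Measurability.
Variables (R : realType) (t0 : R).
Local Notation T := (R * R)%type.

Lemma polar_toC (q : T) : polar t0 (toC q) =
  if (q.1 == 0) && (q.2 == 0) then (1, t0)
  else (Num.sqrt (q.1 ^+ 2 + q.2 ^+ 2), polar_angle t0 q.1 q.2).
Proof.
case: q => x y; rewrite /toC /=; case: ifPn => [/andP[/eqP -> /eqP ->]|xy].
  exact: polar0.
by apply: polar_explicit; apply: contra xy => /eqP[-> ->]; rewrite eqxx.
Qed.

Lemma measurable_norm2 : measurable_fun setT (fun q : T => Num.sqrt (q.1 ^+ 2 + q.2 ^+ 2)).
Proof.
apply: measurableT_comp.
  by apply: continuous_measurable_fun; exact: sqrt_continuous.
by apply: measurable_funD; apply: measurable_funX.
Qed.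

Lemma measurable_acos_clamp1 : measurable_fun setT (fun x : R => acos (clamp1 x)).
Proof.
have clamp1_itv (x : R) : -1 <= clamp1 x <= 1.
  rewrite /clamp1 le_max lexx /= ge_max ge_min lexx /=; apply/andP; split => //; lra.
apply: nonincreasing_measurable => // x y xy; rewrite leNgt; apply/negP.
have acos_itv (z : R) : acos (clamp1 z) \in `[0, pi]%R.
  by rewrite in_itv /= acos_ge0 ?acos_lepi ?clamp1_itv.
rewrite -(ltr_cos (acos_itv x) (acos_itv y)) !acosK ?in_itv ?clamp1_itv //=.
by rewrite ltNge /clamp1 le_max2 ?le_min2.
Qed.

Lemma measurable_polar_angle : measurable_fun setT (fun q : T => polar_angle t0 q.1 q.2).
Proof.
have minv : measurable_fun setT (fun q : T => (Num.sqrt (q.1 ^+ 2 + q.2 ^+ 2))^-1).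
  under eq_fun => q do rewrite -powR_inv1 ?sqrtr_ge0 //.
  exact: measurableT_comp (measurable_powR _) measurable_norm2.
have mxr : measurable_fun setT (fun q : T => (q.1 * cos t0 + q.2 * sin t0)
    / Num.sqrt (q.1 ^+ 2 + q.2 ^+ 2)).
  by apply: measurable_funM => //; apply: measurable_funD; apply: measurable_funM.
have myr : measurable_fun setT (fun q : T => (q.2 * cos t0 - q.1 * sin t0)
    / Num.sqrt (q.1 ^+ 2 + q.2 ^+ 2)).
  by apply: measurable_funM => //; apply: measurable_funB; apply: measurable_funM.
apply: measurable_funD => //; rewrite /circle_angle.
apply: measurable_fun_ifT; first exact: measurable_fun_ler.
  exact: measurableT_comp measurable_acos_clamp1 mxr.
by apply: measurable_funB => //; exact: measurableT_comp measurable_acos_clamp1 mxr.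
Qed.

Let measurable_origin : measurable_fun setT (fun q : T => (q.1 == 0) && (q.2 == 0)).
Proof. by apply: measurable_and; apply: measurable_fun_eqr => //; exact: measurable_cst. Qed.

Lemma measurable_polar_radius : measurable_fun setT (fun q : T => (polar t0 (toC q)).1).
Proof.
under eq_fun => q do rewrite polar_toC (fun_if fst).
by apply: measurable_fun_ifT => //; exact: measurable_norm2.
Qed.

Lemma measurable_polar_arg : measurable_fun setT (fun q : T => (polar t0 (toC q)).2).
Proof.
under eq_fun => q do rewrite polar_toC (fun_if snd).
by apply: measurable_fun_ifT => //; exact: measurable_polar_angle.
Qed.

Lemma measurable_zhalf_component (k : int) (f : R -> R) : continuous f ->
  measurable_fun setT (fun q : T =>
    (polar t0 (toC q)).1 `^ (k%:~R / 2) * f (k%:~R * (polar t0 (toC q)).2 / 2)).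
Proof.
move=> cf; apply: measurable_funM.
  exact: measurableT_comp (measurable_powR _) measurable_polar_radius.
apply: measurableT_comp; first exact: continuous_measurable_fun.
apply: measurable_funM; last exact: measurable_cst.
by apply: measurable_funM; [exact: measurable_cst|exact: measurable_polar_arg].
Qed.

Lemma measurable_Re_zhalf (k : int) :
  measurable_fun setT (fun q : T => complex.Re (zhalf t0 k (toC q))).
Proof.
apply: eq_measurable_fun (measurable_zhalf_component k (@continuous_cos R)) => q _.
by rewrite /zhalf real_mul_expi.
Qed.

Lemma measurable_Im_zhalf (k : int) :
  measurable_fun setT (fun q : T => complex.Im (zhalf t0 k (toC q))).
Proof.
apply: eq_measurable_fun (measurable_zhalf_component k (@continuous_sin R)) => q _.
by rewrite /zhalf real_mul_expi.
Qed.

End Measurability.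

Section ComplexIntegral.
Variables (R : realType) (mu : {finite_measure set (R * R)%type -> \bar R}).
Hypothesis mu_circle : mu (~` @unit_circle R) = 0%E.
Local Notation T := (R * R)%type.

Lemma measurable_unit_circle : measurable (@unit_circle R).
Proof.
have : measurable_fun setT (fun q : T => q.1 ^+ 2 + q.2 ^+ 2 == 1).
  apply: measurable_fun_eqr; last exact: measurable_cst.
  by apply: measurable_funD; apply: measurable_funX; [exact: measurable_fst|exact: measurable_snd].
move=> /(_ measurableT [set true] I); rewrite setTI; congr measurable.
by apply/seteqP; split => q /=; [move/eqP|move=> ->; rewrite eqxx].
Qed.

Lemma ae_unit_circle (P : T -> Prop) : (forall q, unit_circle q -> P q) ->
  {ae mu, forall q, P q}.
Proof.
move=> hP; exists (~` @unit_circle R); split => //.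
  exact: measurableC measurable_unit_circle.
by move=> q /= nPq; apply: contra_not nPq; exact: hP.
Qed.

Lemma integrable_bounded_on_circle (f : T -> R) : measurable_fun setT f ->
  (forall q, unit_circle q -> `|f q| <= 1) -> mu.-integrable setT (EFin \o f).
Proof.
move=> mf f_le1; apply/integrableP; split; first exact/measurable_EFinP.
apply: (le_lt_trans (@integral_le_bound _ _ _ mu setT _ 1%:E _ _ _ _)) => //.
- exact/measurable_EFinP.
- by apply: ae_unit_circle => q /f_le1 ? _; rewrite lee_fin.
- by rewrite mul1e; apply: fin_num_fun_lty; exact: fin_num_measure.
Qed.

Lemma eq_Rintegral_on_circle (f g : T -> R) :
  measurable_fun setT f -> measurable_fun setT g ->
  (forall q, unit_circle q -> f q = g q) ->
  Rintegral mu setT f = Rintegral mu setT g.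
Proof.
move=> mf mg fg; congr fine; apply: ae_eq_integral => //; try exact/measurable_EFinP.
by apply: ae_unit_circle => q /fg /= ->.
Qed.

Definition cintegrable (f : T -> R[i]) :=
  mu.-integrable setT (EFin \o (fun q => complex.Re (f q))) /\
  mu.-integrable setT (EFin \o (fun q => complex.Im (f q))).

Lemma cintegrable_zhalf (t0 : R) (k : int) : cintegrable (fun q => zhalf t0 k (toC q)).
Proof.
have polar_radius_circle q : unit_circle q -> (polar t0 (toC q)).1 = 1.
  by rewrite polar_toC; case: ifP => // _ /= ->; rewrite sqrtr1.
split; apply: integrable_bounded_on_circle.
- exact: measurable_Re_zhalf.
- move=> q /polar_radius_circle r1.
  by rewrite /zhalf real_mul_expi /= r1 powR1 mul1r ler_norml cos_geN1 cos_le1.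
- exact: measurable_Im_zhalf.
- move=> q /polar_radius_circle r1.
  by rewrite /zhalf real_mul_expi /= r1 powR1 mul1r ler_norml sin_geN1 sin_le1.
Qed.

Lemma ReM (x y : R[i]) :
  complex.Re (x * y) = complex.Re x * complex.Re y - complex.Im x * complex.Im y.
Proof. by case: x; case: y. Qed.

Lemma ImM (x y : R[i]) :
  complex.Im (x * y) = complex.Re x * complex.Im y + complex.Im x * complex.Re y.
Proof. by case: x; case: y. Qed.

Lemma cintegrable0 : cintegrable (fun _ => 0).
Proof. by split; apply: integrable_bounded_on_circle => // q _; rewrite normr0. Qed.

Lemma cintegrableD f g : cintegrable f -> cintegrable g -> cintegrable (fun q => f q + g q).
Proof.
move=> [f1 f2] [g1 g2]; split.
  by apply: (eq_integrable _ _ _ _ (integrableD _ f1 g1)) => // q _ /=; rewrite raddfD.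
by apply: (eq_integrable _ _ _ _ (integrableD _ f2 g2)) => // q _ /=; rewrite raddfD.
Qed.

Lemma cintegrableZ a f : cintegrable f -> cintegrable (fun q => a * f q).
Proof.
move=> [f1 f2]; split.
  apply: (eq_integrable _ _ _ _ (integrableB _ (integrableZl _ (complex.Re a) f1)
    (integrableZl _ (complex.Im a) f2))) => // q _ /=.
  by rewrite ReM.
apply: (eq_integrable _ _ _ _ (integrableD _ (integrableZl _ (complex.Re a) f2)
  (integrableZl _ (complex.Im a) f1))) => // q _ /=.
by rewrite ImM.
Qed.

Lemma cint0 : cint mu (fun _ => 0) = 0.
Proof. by rewrite /cint /= !Rintegral_cst // !mul0r. Qed.

Lemma cintD f g : cintegrable f -> cintegrable g ->
  cint mu (fun q => f q + g q) = cint mu f + cint mu g.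
Proof.
move=> [f1 f2] [g1 g2]; rewrite /cint.
under eq_Rintegral do rewrite raddfD.
under [X in _ +i* X]eq_Rintegral do rewrite raddfD.
by rewrite !RintegralD.
Qed.

Let integrable_scale k (g : T -> R) : mu.-integrable setT (EFin \o g) ->
  mu.-integrable setT (EFin \o (fun q => k * g q)).
Proof. exact: integrableZl. Qed.

Lemma cintZ a f : cintegrable f -> cint mu (fun q => a * f q) = a * cint mu f.
Proof.
move=> [f1 f2]; rewrite /cint.
under eq_Rintegral do rewrite ReM.
under [X in _ +i* X]eq_Rintegral do rewrite ImM.
rewrite RintegralB ?RintegralD ?RintegralZl //; try exact: integrable_scale.
by case: a => ar ai /=; simpc.
Qed.

Lemma cint_sum (I : Type) (s : seq I) (F : I -> T -> R[i]) :
  (forall i, cintegrable (F i)) ->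
  cint mu (fun q => \sum_(i <- s) F i q) = \sum_(i <- s) cint mu (F i).
Proof.
move=> hF; suff : cintegrable (fun q => \sum_(i <- s) F i q) /\
    cint mu (fun q => \sum_(i <- s) F i q) = \sum_(i <- s) cint mu (F i) by case.
elim: s => [|i s [IHint IHeq]].
  under eq_fun do rewrite big_nil; rewrite big_nil.
  by split; [exact: cintegrable0|exact: cint0].
under eq_fun do rewrite big_cons; rewrite big_cons.
by split; [exact: cintegrableD|rewrite cintD // IHeq].
Qed.

Definition moment (t0 : R) (k : int) : R[i] := cint mu (fun q => zhalf t0 k (toC q)).

Lemma momentN (t0 : R) (k : int) : moment t0 (- k) = (moment t0 k)^*.
Proof.
have [_ Imk] := cintegrable_zhalf t0 k.
have zhalfN q : unit_circle q -> zhalf t0 (- k) (toC q) = (zhalf t0 k (toC q))^*.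
  by move=> q1; apply: zhalfN_unit.
rewrite /moment /cint; simpc; congr (_ +i* _).
  apply: eq_Rintegral_on_circle; try exact: measurable_Re_zhalf.
  by move=> q /zhalfN ->; case: (zhalf t0 k (toC q)).
rewrite -mulN1r -RintegralZl //; apply: eq_Rintegral_on_circle.
- exact: measurable_Im_zhalf.
- by apply: measurable_funM => //; exact: measurable_Im_zhalf.
- by move=> q /zhalfN ->; case: (zhalf t0 k (toC q)) => x y /=; rewrite mulN1r.
Qed.

Lemma cint_spanfun (t0 : R) (a2 : int) (m : nat) (c : 'I_m -> R[i]) (e : int) :
  cint mu (fun q => spanfun t0 a2 c (toC q) * zhalf t0 e (toC q)) =
  \sum_(i < m) c i * moment t0 (a2 + 2 * (i : nat)%:Z + e).
Proof.
under eq_fun do rewrite /spanfun mulr_suml.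
under eq_fun do under eq_bigr do rewrite -mulrA zhalfD.
rewrite cint_sum => [|i]; last exact/cintegrableZ/cintegrable_zhalf.
by apply: eq_bigr => i _; rewrite cintZ //; exact: cintegrable_zhalf.
Qed.

End ComplexIntegral.

Section CoefficientReflection.
Variables (R : realType) (tau : R[i]).
Hypothesis tau_unit : `|tau| = 1.

Definition reflect_coef (m : nat) (c : 'I_m -> R[i]) : 'I_m -> R[i] :=
  fun i => tau * (c (rev_ord i))^*.

Lemma reflect_coefD m : {morph @reflect_coef m : c d / c + d}.
Proof. by move=> c d; apply/funext => i; rewrite /reflect_coef /= rmorphD mulrDr. Qed.

Lemma reflect_coefZ m a (c : 'I_m -> R[i]) :
  reflect_coef (a *: c) = Num.conj a *: reflect_coef c.
Proof.
apply/funext => i; rewrite /reflect_coef /= rmorphM mulrCA.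
by rewrite -[Num.conj a]/(a^*).
Qed.

Lemma reflect_coefK m : involutive (@reflect_coef m).
Proof.
have tau_conj : tau * Num.conj tau = 1 by rewrite -normCK tau_unit expr1n.
move=> c; apply/funext => i; rewrite /reflect_coef rev_ordK rmorphM /= conjCK.
by rewrite mulrA tau_conj mul1r.
Qed.

Lemma spanfun_reflect_coef (t0 : R) m (c : 'I_m -> R[i]) (z : R[i]) : z != 0 ->
  spanfun t0 (1 - m%:Z) (reflect_coef c) z =
  tau * (spanfun t0 (1 - m%:Z) c ((z^*)^-1))^*.
Proof.
move=> z_neq0; rewrite /spanfun rmorph_sum mulr_sumr (reindex_inj rev_ord_inj).
apply: eq_bigr => i _.
have -> : 1 - m%:Z + 2 * (rev_ord i : nat)%:Z = - (1 - m%:Z + 2 * (i : nat)%:Z).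
  by rewrite /=; have := ltn_ord i; lia.
by rewrite /reflect_coef rev_ordK -zhalf_reflect // -mulrA -rmorphM.
Qed.

End CoefficientReflection.

Section MomentSystem.
Variables (R : realType) (r : nat).
Variable mu : 'I_r -> {finite_measure set (R * R)%type -> \bar R}.
Hypothesis mu_circle : forall j, mu j (~` @unit_circle R) = 0%E.
Variables (t0 : R) (n : 'I_r -> nat).
Local Notation N := (nabs n).
Local Notation S := {j : 'I_r & 'I_(n j)}.

(* Entry [(i, (j, l))] pairs the [i]-th basis function z^{(-|n| + 2i)/2} of
   phi with the [l]-th condition on [mu_j].  The basis of X and its conditions
   are both shifted by 1/2, so the system for X is this matrix without its
   last row. *)
Definition moment_matrix (i : 'I_N.+1) (s : S) : R[i] :=
  moment (mu (tag s)) t0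
    (2 * (i : nat)%:Z + (n (tag s))%:Z - 2 * (tagged s : nat)%:Z - N%:Z).

Local Notation widen := (widen_ord (leqnSn N)).
Local Notation moment_matrix' := (fun i => moment_matrix (widen i)).

Lemma card_moment_conditions : #|{: S}| = N.
Proof.
rewrite card_tagged /nabs sumnE big_map big_enum /=.
by apply: eq_bigr => j _; rewrite card_ord.
Qed.

Lemma phi_conditionsE (c : 'I_N.+1 -> R[i]) :
  (forall j (l : 'I_(n j)), cint (mu j) (fun q =>
     spanfun t0 (- N%:Z) c (toC q) *
     zhalf t0 (- (- (n j)%:Z + 2 * (l : nat)%:Z)) (toC q)) = 0) <->
  annihilates moment_matrix c.
Proof.
have cintE j (l : 'I_(n j)) : cint (mu j) (fun q =>
    spanfun t0 (- N%:Z) c (toC q) *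
    zhalf t0 (- (- (n j)%:Z + 2 * (l : nat)%:Z)) (toC q)) =
  \sum_i c i * moment_matrix i (Tagged (fun j => 'I_(n j)) l).
  rewrite cint_spanfun //; apply: eq_bigr => i _.
  by rewrite /moment_matrix /=; congr (_ * moment _ _ _); lia.
by split=> [c_orth [j l]|c_ann j l]; [rewrite -cintE c_orth|rewrite cintE c_ann].
Qed.

Lemma X_conditionsE (c : 'I_N -> R[i]) :
  (forall j (l : 'I_(n j)), cint (mu j) (fun q =>
     spanfun t0 (1 - N%:Z) c (toC q) *
     zhalf t0 (- (1 - (n j)%:Z + 2 * (l : nat)%:Z)) (toC q)) = 0) <->
  annihilates moment_matrix' c.
Proof.
have cintE j (l : 'I_(n j)) : cint (mu j) (fun q =>
    spanfun t0 (1 - N%:Z) c (toC q) *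
    zhalf t0 (- (1 - (n j)%:Z + 2 * (l : nat)%:Z)) (toC q)) =
  \sum_i c i * moment_matrix' i (Tagged (fun j => 'I_(n j)) l).
  rewrite cint_spanfun //; apply: eq_bigr => i _.
  by rewrite /moment_matrix /=; congr (_ * moment _ _ _); lia.
by split=> [c_orth [j l]|c_ann j l]; [rewrite -cintE c_orth|rewrite cintE c_ann].
Qed.

Lemma annihilates_reflect_coef (tau : R[i]) (c : 'I_N -> R[i]) :
  annihilates moment_matrix' c -> annihilates moment_matrix' (reflect_coef tau c).
Proof.
move=> c_ann [j l]; have := c_ann (Tagged (fun j => 'I_(n j)) (rev_ord l)).
rewrite (reindex_inj rev_ord_inj) /= => /(congr1 (fun x => tau * conjc x)).
rewrite rmorph_sum mulr_sumr rmorph0 mulr0 => sum_eq0.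
apply: etrans sum_eq0; apply: eq_bigr => i _.
rewrite /reflect_coef rmorphM mulrA; congr (_ * _).
have -> : moment_matrix (widen i) (Tagged (fun j => 'I_(n j)) l) = moment (mu j) t0
    (- (2 * (rev_ord i : nat)%:Z + (n j)%:Z - 2 * (rev_ord l : nat)%:Z - N%:Z)).
  by rewrite /moment_matrix /=; congr moment; have := ltn_ord i; have := ltn_ord l; lia.
by rewrite momentN.
Qed.

Lemma phi_normal_iff_kernel0 :
  phi_normal t0 (fun j => (mu j : {measure set (R * R)%type -> \bar R})) n <->
  (forall c : 'I_N -> R[i], annihilates moment_matrix' c -> c = (fun _ => 0)).
Proof.
have [uniq_ker0 ker0_uniq] :=
  unique_monic_annihilator moment_matrix card_moment_conditions.
split=> [[n0|[c [[c_max /phi_conditionsE c_ann] c_uniq]]]|].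
- have N0 : N = 0%N by rewrite /nabs n0 big1.
  by move=> c _; apply/funext => i; have := ltn_ord i; rewrite {2}N0.
- apply: uniq_ker0; exists c; split=> // y [y_max y_ann].
  by apply: c_uniq; split=> //; exact/phi_conditionsE.
- move=> /ker0_uniq[c [[c_max c_ann] c_uniq]].
  right; exists c; split=> [|y [y_max /phi_conditionsE y_ann]]; last exact: c_uniq.
  by split=> //; exact/phi_conditionsE.
Qed.

Lemma kernel0_iff_no_symmetric (tau : R[i]) : `|tau| = 1 ->
  (forall c : 'I_N -> R[i], annihilates moment_matrix' c -> c = (fun _ => 0)) <->
  ~ exists c : 'I_N -> R[i],
      c <> (fun _ => 0) /\
      (forall z : R[i], z != 0 ->
         spanfun t0 (1 - N%:Z) c z = tau * (spanfun t0 (1 - N%:Z) c ((z^*)^-1))^*) /\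
      (forall (j : 'I_r) (l : 'I_(n j)),
         cint (mu j) (fun q =>
           spanfun t0 (1 - N%:Z) c (toC q) *
           zhalf t0 (- (1 - (n j)%:Z + 2 * (l : nat)%:Z)) (toC q)) = 0).
Proof.
move=> tau_unit; split=> [ker0 [c [c_neq0 [_ /X_conditionsE /ker0]]] //|no_sym c c_ann].
apply: contrapT => /eqP c_neq0.
have [v [v_ann /eqP v_neq0 v_fixed]] := antilinear_fixed_point (@reflect_coefD _ tau N)
  (@reflect_coefZ _ tau N) (reflect_coefK tau_unit (m:=N)) (@annihilates_lin _ _ _ _)
  (@annihilates_reflect_coef tau) c_ann c_neq0.
apply: no_sym; exists v; split=> //; split; last exact/X_conditionsE.
by move=> z z_neq0; rewrite -{1}v_fixed spanfun_reflect_coef.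
Qed.

End MomentSystem.

Unset Implicit Arguments.

Theorem proposition3p3 (R : realType) (r : nat)
  (mu : 'I_r -> {finite_measure set (R * R)%type -> \bar R})
  (mu_circle : forall j : 'I_r, mu j (~` @unit_circle R) = 0%E)
  (mu_infinite : forall j : 'I_r, ~ finite_set (msupport (mu j)))
  (t0 : R) (n : 'I_r -> nat) (tau : R[i]) (htau : `|tau| = 1) :
  phi_normal t0 (fun j => (mu j : {measure set (R * R)%type -> \bar R})) n <->
  ~ exists c : 'I_(nabs n) -> R[i],
      c <> (fun _ => 0) /\
      (forall z : R[i], z != 0 ->
         spanfun t0 (1 - (nabs n)%:Z) c z =
         tau * (spanfun t0 (1 - (nabs n)%:Z) c ((z^*)^-1))^*) /\
      (forall (j : 'I_r) (l : 'I_(n j)),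
         cint (mu j) (fun q =>
           spanfun t0 (1 - (nabs n)%:Z) c (toC q) *
           zhalf t0 (- (1 - (n j)%:Z + 2 * (l : nat)%:Z)) (toC q)) = 0).
Proof.
exact: iff_trans (phi_normal_iff_kernel0 mu_circle t0 n)
  (kernel0_iff_no_symmetric mu_circle t0 n htau).
Qed.
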